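(* Let $\mathbb{K}$ be a field of characteristic $0$, $R=\mathbb{K}[x_1,\dots,x_n]$, $I\subseteq R$ a zero-dimensional ideal and $P$ a minimal prime of $I$. Then for every integer $d\ge 0$, $D_P^{(d)}[I]=D_P[I+P^{d+1}]$.
   Context: $W_{\kappa(P)}$ denotes the set of operators $D=\sum_\alpha c_\alpha\partial^\alpha$ (finite sums) with $c_\alpha\in\kappa(P)=R/P$, $\partial^\alpha=\partial_1^{\alpha_1}\cdots\partial_n^{\alpha_n}$, $\partial_i=\partial/\partial x_i$. For $f\in R$, $\langle D,f\rangle=\sum_\alpha c_\alpha\overline{\partial^\alpha f}\in\kappa(P)$ (image modulo $P$). For an ideal $J$, $D_P[J]=\{D\in W_{\kappa(P)}:\langle D,f\rangle=0\ \forall f\in J\}$. The $\partial$-degree of $D$ is its total degree as a polynomial in $\partial_1,\dots,\partial_n$, and $D_P^{(d)}[I]:=\{D\in D_P[I]: \partial\text{-degree of }D\le d\}$. *)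

From HB Require Import structures.
From mathcomp Require Import all_boot all_algebra.
From mathcomp Require Import mpoly.
Set Implicit Arguments. Unset Strict Implicit. Unset Printing Implicit Defensive.
Import GRing.Theory.
Local Open Scope ring_scope.

Section Defs.
Variables (K : fieldType) (n : nat).
Local Notation R := {mpoly K[n]}.

Definition is_ideal (I : R -> Prop) : Prop :=
  [/\ I 0, (forall f g, I f -> I g -> I (f + g)) & (forall r f, I f -> I (r * f))].

Definition is_prime (P : R -> Prop) : Prop :=
  [/\ is_ideal P, ~ P 1 & (forall a b, P (a * b) -> P a \/ P b)].

Definition is_minimal_prime (I P : R -> Prop) : Prop :=
  [/\ is_prime P, (forall f, I f -> P f) &
      (forall Q, is_prime Q -> (forall f, I f -> Q f) -> (forall f, Q f -> P f) ->
                 forall f, P f -> Q f)].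

(* zero-dimensional: R/I is a finite-dimensional K-vector space, i.e. spanned by
   the classes of finitely many polynomials *)
Definition zero_dimensional (I : R -> Prop) : Prop :=
  is_ideal I /\
  exists B : seq R, forall f, exists c : nat -> K,
      I (f - \sum_(i < size B) c i *: B`_i).

Definition ideal_add (I J : R -> Prop) : R -> Prop :=
  fun f => exists g h, [/\ I g, J h & f = g + h].

Definition ideal_mul (I J : R -> Prop) : R -> Prop :=
  fun f => exists s : seq (R * R),
      (forall p, p \in s -> I p.1 /\ J p.2) /\ f = \sum_(p <- s) p.1 * p.2.

Fixpoint ideal_pow (P : R -> Prop) (k : nat) : R -> Prop :=
  match k with
  | 0 => fun _ => True
  | k'.+1 => ideal_mul (ideal_pow P k') P
  end.

(* A differential operator D = \sum_a c_a d^a with coefficients in kappa(P) = R/P is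
   represented by a polynomial in the d_i with coefficients in R (representatives of
   the classes in R/P): D@_a is (a representative of) c_a. *)
Definition diffop := {mpoly R[n]}.

(* <D, f> computed in R; its image in kappa(P) is zero iff it lies in P *)
Definition dpair (D : diffop) (f : R) : R :=
  \sum_(a <- msupp D) D@_a * mderivm a f.

Definition in_DP (P J : R -> Prop) (D : diffop) : Prop :=
  forall f, J f -> P (dpair D f).

(* the d-degree of D (as an operator over kappa(P)) is at most d:
   all coefficients c_a with |a| > d vanish in kappa(P) *)
Definition ddeg_le (P : R -> Prop) (D : diffop) (d : nat) : Prop :=
  forall a : 'X_{1..n}, (d < mdeg a)%N -> P (D@_a).

Definition in_DPd (P I : R -> Prop) (d : nat) (D : diffop) : Prop :=
  in_DP P I D /\ ddeg_le P D d.

End Defs.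

(* One inclusion holds because [\partial^a] maps [P^(d+1)] into [P] when [|a| <= d].
   Conversely, since [I] is zero-dimensional, for each variable [x_j] some nonzero
   univariate [q(x_j)] lies in [I], hence in [P]; differentiating it repeatedly
   (characteristic 0) yields [g_j(x_j)] in [P] with [g_j'] not in [P].  For [|b| > d]
   the product [f_b = \prod_j g_j^(b_j)] lies in [P^|b|], a subset of [P^(d+1)].
   Modulo [P], [\partial^a f_b] vanishes unless [a >= b] componentwise, while
   [\partial^b f_b] is congruent to [\prod_j b_j! g_j'^(b_j)], which is not in the
   prime [P].  So once the coefficients of [D] of degree [> |b|] are known to lie in
   [P], [<D, f_b>] in [P] forces the coefficient of [\partial^b] into [P]; conclude by
   descending induction on [|b|]. *)

From HB Require Import structures.
From mathcomp Require Import all_boot all_algebra.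
From mathcomp Require Import mpoly.
From mathcomp Require Import ring zify.
From Stdlib Require Import Classical.
Set Implicit Arguments. Unset Strict Implicit. Unset Printing Implicit Defensive.
Import GRing.Theory.
Local Open Scope ring_scope.

Section Ideal.
Variables (K : fieldType) (n : nat).
Local Notation R := {mpoly K[n]}.
Variable P : R -> Prop.
Hypothesis idealP : is_ideal P.

Lemma ideal0 : P 0. Proof. by case: idealP. Qed.

Lemma idealD f g : P f -> P g -> P (f + g).
Proof. by case: idealP => _ + _; apply. Qed.

Lemma idealMl r f : P f -> P (r * f).
Proof. by case: idealP => _ _; apply. Qed.

Lemma idealMr r f : P f -> P (f * r).
Proof. by rewrite mulrC; apply: idealMl. Qed.

Lemma idealB f g : P f -> P g -> P (f - g).
Proof. by move=> Pf Pg; rewrite -mulN1r; apply/idealD/idealMl. Qed.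

Lemma idealZ (c : K) f : P f -> P (c *: f).
Proof. by rewrite -mul_mpolyC; apply: idealMl. Qed.

Lemma ideal_sum (I : eqType) (r : seq I) (F : I -> R) :
  (forall i, i \in r -> P (F i)) -> P (\sum_(i <- r) F i).
Proof.
elim: r => [|i r IHr] PF; first by rewrite big_nil; apply: ideal0.
rewrite big_cons; apply: idealD; first by apply: PF; rewrite mem_head.
by apply: IHr => j rj; apply: PF; rewrite in_cons rj orbT.
Qed.

Lemma ideal_notin_mpolyC (c : K) : ~ P 1 -> c != 0 -> ~ P c%:MP.
Proof.
move=> P1 c0 Pc; apply: P1.
by rewrite -mpolyC1 -(mulVf c0) mpolyCM; apply: idealMl.
Qed.

End Ideal.

Section IdealPow.
Variables (K : fieldType) (n : nat).
Local Notation R := {mpoly K[n]}.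
Variable P : R -> Prop.
Hypothesis idealP : is_ideal P.

Lemma ideal_pow_ideal k : is_ideal (ideal_pow P k).
Proof.
elim: k => [|k [_ _ IHmul]]; first by split.
split.
- by exists [::]; rewrite big_nil.
- move=> _ _ [s1 [s1P ->]] [s2 [s2P ->]]; exists (s1 ++ s2); split.
    by move=> p; rewrite mem_cat => /orP[]; [apply: s1P | apply: s2P].
  by rewrite big_cat.
- move=> r _ [s [sP ->]]; exists [seq (r * p.1, p.2) | p <- s]; split.
    by move=> _ /mapP[p /sP[Pp1 Pp2] ->]; split => //; apply: IHmul.
  by rewrite big_map mulr_sumr; apply: eq_bigr => p _; rewrite mulrA.
Qed.

Lemma ideal_pow_mul k f g : ideal_pow P k f -> P g -> ideal_pow P k.+1 (f * g).
Proof.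
by move=> Pf Pg; exists [:: (f, g)]; split; [move=> p /[1!inE] /eqP -> | rewrite big_seq1].
Qed.

Lemma ideal_pow_leq k m f : (k <= m)%N -> ideal_pow P m f -> ideal_pow P k f.
Proof.
have pow_succ i g : ideal_pow P i.+1 g -> ideal_pow P i g.
  elim: i g => [//|i IHi] _ [s [sP ->]]; exists s; split => // p sp.
  by have [Pp1 Pp2] := sP p sp; split => //; apply: IHi.
move=> /subnK <-; elim: (m - k)%N f => [//|j IHj] f Pf.
by apply/IHj/pow_succ.
Qed.

Lemma ideal_pow_exp_mul k m x y :
  P x -> ideal_pow P k y -> ideal_pow P (m + k) (x ^+ m * y).
Proof.
move=> Px Py; elim: m => [|m IHm]; first by rewrite expr0 mul1r.
by rewrite addSn exprSr mulrAC; apply: ideal_pow_mul.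
Qed.

Lemma ideal_pow1 f : ideal_pow P 1 f -> P f.
Proof.
by move=> [s [sP ->]]; apply: (ideal_sum idealP) => p /sP[_]; apply: idealMl.
Qed.

Lemma ideal_pow_mderiv i k f : ideal_pow P k.+1 f -> ideal_pow P k (mderiv i f).
Proof.
elim: k f => [//|k IHk] _ [s [sP ->]].
have powP := ideal_pow_ideal k.+1.
rewrite raddf_sum; apply: (ideal_sum powP) => -[g h] /sP[/= Pg Ph].
rewrite mderivM; apply: (idealD powP); first by apply: ideal_pow_mul => //; apply: IHk.
exact: (idealMr powP) Pg.
Qed.

Lemma mderivm_ideal_pow a k f :
  ideal_pow P (mdeg a + k) f -> ideal_pow P k (mderivm a f).
Proof.
rewrite mdegE /mderivm /index_enum -enumT.
elim: (enum 'I_n) k => [|i r IHr] k /=; first by rewrite big_nil.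
rewrite big_cons -addnA addnCA => /IHr; elim: (a i) k => [//|m IHm] k Pf /=.
by apply/ideal_pow_mderiv/IHm; rewrite addnS.
Qed.
End IdealPow.

Section Prime.
Variables (K : fieldType) (n : nat).
Local Notation R := {mpoly K[n]}.
Variable P : R -> Prop.
Hypothesis primeP : is_prime P.

Lemma prime_exp x m : P (x ^+ m) -> P x.
Proof.
have [_ P1 PM] := primeP.
by elim: m => [|m IHm]; [rewrite expr0 | rewrite exprS => /PM[|/IHm]].
Qed.

Lemma prime_prod (I : Type) (r : seq I) (F : I -> R) :
  P (\prod_(i <- r) F i) -> exists i, P (F i).
Proof.
have [_ P1 PM] := primeP.
elim: r => [|i r IHr]; first by rewrite big_nil => /P1.
by rewrite big_cons => /PM[Pi|/IHr//]; exists i.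
Qed.
End Prime.

Lemma lepm_mdeg_eq n (a b : 'X_{1..n}) : (b <= a)%MM -> (mdeg a <= mdeg b)%N -> a = b.
Proof.
move=> /submK <-; rewrite mdegD -[X in (_ <= X)%N]add0n leq_add2r leqn0 mdeg_eq0.
by move=> /eqP ->; rewrite add0m.
Qed.

Lemma mdeg_le_neq_lt n (a b : 'X_{1..n}) :
  (mdeg a <= mdeg b)%N -> a != b -> exists j, (a j < b j)%N.
Proof.
move=> le_ab ab; have /forallPn[j] : ~~ (b <= a)%MM.
  by apply: contra ab => /lepm_mdeg_eq/(_ le_ab)/eqP.
by rewrite -ltnNge; exists j.
Qed.

Lemma mcoeff_desc_ind (R : nzRingType) n (p : {mpoly R[n]}) (Q : R -> Prop) d :
    Q 0 ->
    (forall b, (d < mdeg b)%N -> (forall a, (mdeg b < mdeg a)%N -> Q p@_a) -> Q p@_b) ->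
  forall b, (d < mdeg b)%N -> Q p@_b.
Proof.
move=> Q0 step b; have [k] := ubnP (msize p - mdeg b); elim: k b => // k IHk b bound db.
apply: step => // a ba; have [pa|/memN_msupp_eq0 -> //] := boolP (a \in msupp p).
apply: IHk; last exact: ltn_trans db ba.
by have := msize_mdeg_lt pa; lia.
Qed.

Lemma derivn_exp (R : comNzRingType) (p : {poly R}) m b : (m <= b)%N ->
  exists h, (p ^+ b)^`(m) = p ^+ (b - m) * ((b ^_ m)%:R * p^`() ^+ m + p * h).
Proof.
elim: m => [|m IHm] le_mb.
  by exists 0; rewrite derivn0 subn0 ffactn0 mulr0 addr0 mul1r mulr1.
have [h eq_h] := IHm (ltnW le_mb).
rewrite derivnS eq_h ffactnSr natrM.
have -> : (b - m = (b - m.+1).+1)%N by rewrite subnS prednK ?subn_gt0.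
set k := (b - m.+1)%N; set c := (b ^_ m)%:R; set Y := c * _ + _.
exists (k.+1%:R * p^`() * h + Y^`()).
by rewrite derivM deriv_exp -mulr_natr /Y /= !exprS; ring.
Qed.

Lemma pchar0_deriv_neq0 (K : fieldType) (p : {poly K}) :
  [pchar K] =i pred0 -> (1 < size p)%N -> p^`() != 0.
Proof.
move=> charK0 sp; apply/eqP => dp.
have := coef_deriv p (size p).-2; rewrite dp coef0 -mulr_natr => /esym/eqP.
rewrite mulf_eq0 ((pcharf0P K).1 charK0) orbF.
have -> : (size p).-2.+1 = (size p).-1 by case: (size p) sp => [|[]].
by rewrite -lead_coefE lead_coef_eq0 => /eqP p0; rewrite p0 size_poly0 in sp.
Qed.

Section PolyEmbedding.
Variables (K : fieldType) (n : nat).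
Local Notation R := {mpoly K[n]}.

Definition mhorner (u : R) : {poly K} -> R :=
  horner_morph (fun c : K => mulrC u c%:MP).

HB.instance Definition _ u := GRing.RMorphism.on (mhorner u).

Lemma mhornerC u c : mhorner u c%:P = c%:MP.
Proof. exact: horner_morphC. Qed.

Lemma mhornerX u : mhorner u 'X = u.
Proof. exact: horner_morphX. Qed.

Lemma mhornerZ u c q : mhorner u (c *: q) = c *: mhorner u q.
Proof. by rewrite -mul_polyC rmorphM /= mhornerC mul_mpolyC. Qed.

Lemma mderiv_mpolyX i j : mderiv i ('X_j : R) = (i == j)%:R.
Proof.
rewrite mderivX mnm1E eq_sym; case: eqVneq => [->|_]; last by rewrite scale0r.
have -> : (U_(j) - U_(j) = 0)%MM by apply/mnmP => k; rewrite mnmBE subnn mnm0E.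
by rewrite mpolyX0 scale1r.
Qed.

Lemma mderiv_mhorner i j q :
  mderiv i (mhorner 'X_j q) = if i == j then mhorner 'X_j q^`() else 0.
Proof.
elim/poly_ind: q => [|q c IHq]; first by rewrite deriv0 !rmorph0 mderiv0 if_same.
rewrite derivMXaddC !rmorphD !rmorphM /= !mhornerC mhornerX.
rewrite mderivD mderivC addr0 mderivM IHq mderiv_mpolyX.
by case: eqP; rewrite ?mul0r ?mulr0 ?add0r ?addr0 // mulr1 addrC.
Qed.

Lemma mderiv_prod_mhorner i (q : 'I_n -> {poly K}) :
  mderiv i (\prod_j mhorner 'X_j (q j)) =
  \prod_j mhorner 'X_j (if j == i then (q j)^`() else q j).
Proof.
have rest_const : mderiv i (\prod_(j | j != i) mhorner 'X_j (q j)) = 0.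
  apply: (big_ind (fun p => mderiv i p = 0)) => [|x y dx dy|].
  - by rewrite -mpolyC1 mderivC.
  - by rewrite mderivM dx dy mulr0 mul0r addr0.
  - by move=> j /negbTE ji; rewrite mderiv_mhorner eq_sym ji.
rewrite (bigD1 i) //= mderivM rest_const mulr0 addr0 mderiv_mhorner eqxx.
rewrite [RHS](bigD1 i) //= eqxx; congr (_ * _).
by apply: eq_bigr => j /negbTE ->.
Qed.

Lemma iter_mderiv_prod_mhorner i k (q : 'I_n -> {poly K}) :
  iter k (mderiv i) (\prod_j mhorner 'X_j (q j)) =
  \prod_j mhorner 'X_j (if j == i then (q j)^`(k) else q j).
Proof.
elim: k => [|k IHk]; first by apply: eq_bigr => j _; rewrite derivn0 if_same.
rewrite iterS IHk mderiv_prod_mhorner; apply: eq_bigr => j _.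
by case: eqP; rewrite ?derivnS.
Qed.

Lemma mderivm_prod_mhorner (a : 'X_{1..n}) (q : 'I_n -> {poly K}) :
  mderivm a (\prod_j mhorner 'X_j (q j)) = \prod_j mhorner 'X_j ((q j)^`(a j)).
Proof.
suff foldr_prod r : uniq r ->
    foldr (fun i => iter (a i) (mderiv i)) (\prod_j mhorner 'X_j (q j)) r =
    \prod_j mhorner 'X_j ((q j)^`(if j \in r then a j else 0)).
  by rewrite /mderivm foldr_prod ?enum_uniq //; apply: eq_bigr => j _; rewrite mem_enum.
elim: r => [_|i r IHr /andP[ir ur]]; first by apply: eq_bigr => j _; rewrite derivn0.
rewrite /= IHr // iter_mderiv_prod_mhorner; apply: eq_bigr => j _.
by rewrite in_cons; case: eqP => [->|]; rewrite ?(negbTE ir) ?derivn0.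
Qed.
End PolyEmbedding.

Lemma exists_mhorner_deriv_notin (K : fieldType) (n : nat) (P : {mpoly K[n]} -> Prop)
    u q : [pchar K] =i pred0 -> is_ideal P -> ~ P 1 ->
  q != 0 -> P (mhorner u q) ->
  exists p, P (mhorner u p) /\ ~ P (mhorner u p^`()).
Proof.
move=> charK0 idealP P1; have [N] := ubnP (size q); elim: N q => // N IHN q sqN q0 Pq.
have [Pdq|] := classic (P (mhorner u q^`())); last by exists q.
have [/size1_polyC qC | sq1] := leqP (size q) 1.
  exfalso; rewrite qC mhornerC in Pq; apply: (ideal_notin_mpolyC idealP P1) Pq.
  by rewrite -polyC_eq0 -qC.
apply: (IHN q^`()) => //; last exact: pchar0_deriv_neq0.
by rewrite -ltnS (leq_trans _ sqN) // ltnS lt_size_deriv.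
Qed.

Lemma zero_dimensional_algebraic (K : fieldType) (n : nat) (I : {mpoly K[n]} -> Prop) u :
  zero_dimensional I -> exists2 q : {poly K}, q != 0 & I (mhorner u q).
Proof.
case=> idealI [B spanB]; set N := size B.
have [c c_spec] := fin_all_exists (fun i : 'I_N.+1 => spanB (u ^+ i)).
(* The [N.+1] powers of [u] are linearly dependent modulo [I], spanned by [N] classes. *)
pose A : 'M[K]_(N.+1, N) := \matrix_(i, l) c i l.
have : kermx A != 0 by rewrite kermx_eq0 -row_leq_rank -ltnNge ltnS rank_leq_col.
case/rowV0Pn => v /sub_kermxP vA0 v0.
exists (\poly_(i < N.+1) v 0 (inord i)).
  apply: contra v0 => /eqP q0; apply/eqP/rowP => i; rewrite mxE.
  by have := congr1 (coefp i) q0; rewrite /= coef_poly ltn_ord inord_val coef0.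
have -> : mhorner u (\poly_(i < N.+1) v 0 (inord i)) =
    \sum_(i < N.+1) v 0 i *: (u ^+ i - \sum_(l < N) c i l *: B`_l).
  rewrite poly_def rmorph_sum /=.
  under eq_bigr do rewrite mhornerZ rmorphXn /= mhornerX inord_val.
  under [RHS]eq_bigr do rewrite scalerBr scaler_sumr.
  rewrite sumrB exchange_big /= [X in _ - X]big1 ?subr0 // => l _.
  under eq_bigr do rewrite scalerA.
  rewrite -scaler_suml; have -> : \sum_(i < N.+1) v 0 i * c i l = (v *m A) 0 l.
    by rewrite mxE; apply: eq_bigr => i _; rewrite mxE.
  by rewrite vA0 mxE scale0r.
by apply: (ideal_sum idealI) => i _; apply: (idealZ idealI).
Qed.

Section TestPolynomial.
Variables (K : fieldType) (n : nat).
Local Notation R := {mpoly K[n]}.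
Hypothesis charK0 : [pchar K] =i pred0.
Variable P : R -> Prop.
Hypothesis primeP : is_prime P.
Variable G : 'I_n -> {poly K}.
Hypothesis G_spec : forall j, P (mhorner 'X_j (G j)) /\ ~ P (mhorner 'X_j (G j)^`()).

Let idealP : is_ideal P. Proof. by case: primeP. Qed.

Let test (b : 'X_{1..n}) : R := \prod_j mhorner 'X_j (G j ^+ b j).

Lemma test_ideal_pow b : ideal_pow P (mdeg b) (test b).
Proof.
rewrite mdegE /test; elim: (index_enum _) => [|j r IHr]; first by rewrite !big_nil.
by rewrite !big_cons rmorphXn; apply: ideal_pow_exp_mul; case: (G_spec j).
Qed.

Lemma mderivm_test_lt (a b : 'X_{1..n}) j : (a j < b j)%N -> P (mderivm a (test b)).
Proof.
move=> ab; rewrite mderivm_prod_mhorner (bigD1 j) //=; apply: (idealMr idealP).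
have [h ->] := derivn_exp (G j) (ltnW ab).
have -> : (b j - a j = (b j - a j).-1.+1)%N by rewrite prednK // subn_gt0.
by rewrite exprS -mulrA rmorphM; apply: (idealMr idealP); case: (G_spec j).
Qed.

Lemma mderivm_test_notin b : ~ P (mderivm b (test b)).
Proof.
rewrite mderivm_prod_mhorner => /(prime_prod primeP)[j].
have [h ->] := derivn_exp (G j) (leqnn (b j)).
rewrite subnn expr0 mul1r ffactnn rmorphD !rmorphM /= => Pj.
have [_ P1 PM] := primeP.
have [G_in G'_notin] := G_spec j.
move: (idealB idealP Pj (idealMr idealP (mhorner 'X_j h) G_in)).
rewrite addrK rmorph_nat rmorphXn -mpolyC_nat => /PM[|/(prime_exp primeP)/G'_notin//].
apply: (ideal_notin_mpolyC idealP P1).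
by rewrite ((pcharf0P K).1 charK0) -lt0n fact_gt0.
Qed.

Lemma mcoeff_in_prime_of_higher (I : R -> Prop) (D : diffop K n) d b :
    I 0 -> in_DP P (ideal_add I (ideal_pow P d.+1)) D -> (d < mdeg b)%N ->
    (forall a, (mdeg b < mdeg a)%N -> P D@_a) ->
  P D@_b.
Proof.
move=> I0 DJ db D_high; have [_ _ PM] := primeP.
have /DJ : ideal_add I (ideal_pow P d.+1) (test b).
  by exists 0, (test b); rewrite add0r; split => //; apply: ideal_pow_leq (test_ideal_pow b).
have [Db|/memN_msupp_eq0 -> _] := boolP (b \in msupp D); last exact: ideal0 idealP.
rewrite /dpair (bigD1_seq b) ?msupp_uniq //= => P_pair.
have P_rest : P (\sum_(a <- msupp D | a != b) D@_a * mderivm a (test b)).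
  rewrite big_mkcond; apply: (ideal_sum idealP) => a _.
  case: ifP => [ab|_]; last exact: ideal0.
  have [/D_high Pa|le_ab] := ltnP (mdeg b) (mdeg a); first exact: idealMr.
  have [j lt_j] := mdeg_le_neq_lt le_ab ab.
  exact/(idealMl idealP)/mderivm_test_lt/lt_j.
by have := idealB idealP P_pair P_rest; rewrite addrK => /PM[|/mderivm_test_notin].
Qed.
End TestPolynomial.

Lemma dpairD (K : fieldType) n (D : diffop K n) f g :
  dpair D (f + g) = dpair D f + dpair D g.
Proof. by rewrite /dpair -big_split; apply: eq_bigr => a _; rewrite mderivmD mulrDr. Qed.

Lemma in_DP_ideal_add_of_in_DPd (K : fieldType) n (P I : {mpoly K[n]} -> Prop) d D :
  is_ideal P -> in_DPd P I d D -> in_DP P (ideal_add I (ideal_pow P d.+1)) D.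
Proof.
move=> idealP [DI D_deg] _ [g [h [Ig Ph ->]]].
rewrite dpairD; apply: (idealD idealP); first exact: DI.
apply: (ideal_sum idealP) => a _; have [le_ad|/D_deg] := leqP (mdeg a) d; last exact: idealMr.
apply/(idealMl idealP)/(ideal_pow1 idealP)/mderivm_ideal_pow/(ideal_pow_leq _ Ph).
by rewrite addn1 ltnS.
Qed.

Lemma in_DPd_of_in_DP_ideal_add (K : fieldType) n (P I : {mpoly K[n]} -> Prop) d D :
    [pchar K] =i pred0 -> zero_dimensional I -> is_prime P -> (forall f, I f -> P f) ->
  in_DP P (ideal_add I (ideal_pow P d.+1)) D -> in_DPd P I d D.
Proof.
move=> charK0 zdI primeP IP DJ; have [idealP P1 _] := primeP; have [[I0 _ _] _] := zdI.
split=> [f If|].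
  apply: DJ; exists f, 0; rewrite addr0; split => //.
  by case: (ideal_pow_ideal P d.+1).
have G_ex (j : 'I_n) : exists p, P (mhorner 'X_j p) /\ ~ P (mhorner 'X_j p^`()).
  have [q q0 Iq] := zero_dimensional_algebraic 'X_j zdI.
  exact: exists_mhorner_deriv_notin charK0 idealP P1 q0 (IP _ Iq).
have [G G_spec] := fin_all_exists G_ex.
apply: (mcoeff_desc_ind (ideal0 idealP)) => b.
exact: (mcoeff_in_prime_of_higher charK0 primeP G_spec I0 DJ).
Qed.

Theorem lemma3p14 (K : fieldType) (n : nat)
    (charK0 : [pchar K] =i pred0)
    (I P : {mpoly K[n]} -> Prop)
    (hI : zero_dimensional I) (hP : is_minimal_prime I P) (d : nat) :
  forall D : diffop K n,
    in_DPd P I d D <-> in_DP P (ideal_add I (ideal_pow P d.+1)) D.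
Proof.
have [primeP IP _] := hP; have [idealP _ _] := primeP.
move=> D; split; first exact: in_DP_ideal_add_of_in_DPd.
exact: in_DPd_of_in_DP_ideal_add.
Qed.
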